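(* Let $R$ be a nonempty set of reward functions $r':\mathcal{S}\times\mathcal{A}\to\mathbb{R}$ and define $$R^*(R)=\Big\{\,r^*:\mathcal{S}\times\mathcal{A}\to\mathbb{R}\ :\ \sum_{a\in\mathcal{A}}e^{r^*(s,a)-r'(s,a)}\le1\ \text{for all } s\in\mathcal{S},\ r'\in R\Big\}.$$ Then for every $r^*\in R^*(R)$ and every $\pi\in\Pi$, $$J(\pi,r^* )\le\inf_{r'\in R}\mathbb{E}_\pi\Big[\sum_{t=1}^T r'(s_t,a_t)\Big].$$
   Context: Finite-horizon MDP: finite state set $\mathcal{S}$, finite action set $\mathcal{A}$, horizon $T\ge1$, initial distribution $p_1$, transition kernel $p(s'\mid s,a)$. $\Pi$ is the set of Markov (possibly time-dependent) policies $\pi=(\pi_t(\cdot\mid s))_{t=1}^T$, with $\pi(a_t\mid s_t)$ meaning $\pi_t(a_t\mid s_t)$; $\mathbb{E}_\pi$ is expectation over trajectories generated by $\pi$. The MaxEnt RL objective is $J(\pi,r)=\mathbb{E}_\pi[\sum_{t=1}^T r(s_t,a_t)]+\mathcal{H}_\pi[a\mid s]$ with $\mathcal{H}_\pi[a\mid s]=\mathbb{E}_\pi[-\sum_{t=1}^T\log\pi(a_t\mid s_t)]$. *)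

From Stdlib Require Import Reals.
Open Scope R_scope.

(* States are 0..nS-1, actions are 0..nA-1 (finite sets encoded by indices). *)

Fixpoint sumR (n : nat) (f : nat -> R) : R :=
  match n with
  | O => 0
  | S n' => sumR n' f + f n'
  end.

Definition is_distr (n : nat) (f : nat -> R) : Prop :=
  (forall i, (i < n)%nat -> 0 <= f i) /\ sumR n f = 1.

(* Finite-horizon MDP data:
   p1 s      : initial distribution,
   p s a s'  : transition kernel p(s' | s, a). *)
Definition valid_MDP (nS nA : nat) (p1 : nat -> R) (p : nat -> nat -> nat -> R) : Prop :=
  is_distr nS p1 /\
  (forall s a, (s < nS)%nat -> (a < nA)%nat -> is_distr nS (p s a)).

(* Markov, time-dependent policy: pi t s a = pi_t(a | s), for t = 1..T. *)
Definition valid_policy (nS nA T : nat) (pi : nat -> nat -> nat -> R) : Prop :=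
  forall t s, (1 <= t <= T)%nat -> (s < nS)%nat -> is_distr nA (pi t s).

(* Expectation, over the trajectory distribution generated by pi, of
   acc + sum_{u = t}^{t+k-1} g(u, s_u, a_u), starting at state s at time t. *)
Fixpoint traj_exp (nS nA : nat) (p : nat -> nat -> nat -> R)
    (pi : nat -> nat -> nat -> R) (g : nat -> nat -> nat -> R)
    (k t s : nat) (acc : R) : R :=
  match k with
  | O => acc
  | S k' =>
      sumR nA (fun a => pi t s a *
        sumR nS (fun s' => p s a s' *
          traj_exp nS nA p pi g k' (S t) s' (acc + g t s a)))
  end.

Definition Epi (nS nA T : nat) (p1 : nat -> R) (p : nat -> nat -> nat -> R)
    (pi : nat -> nat -> nat -> R) (g : nat -> nat -> nat -> R) : R :=
  sumR nS (fun s => p1 s * traj_exp nS nA p pi g T 1 s 0).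

Definition Jmaxent (nS nA T : nat) (p1 : nat -> R) (p : nat -> nat -> nat -> R)
    (pi : nat -> nat -> nat -> R) (r : nat -> nat -> R) : R :=
  Epi nS nA T p1 p pi (fun _ s a => r s a)
  + Epi nS nA T p1 p pi (fun t s a => - ln (pi t s a)).

Definition Rstar (nS nA : nat) (Rset : (nat -> nat -> R) -> Prop) (rs : nat -> nat -> R) : Prop :=
  forall s r', (s < nS)%nat -> Rset r' ->
    sumR nA (fun a => exp (rs s a - r' s a)) <= 1.

(* The integrand of J(pi, r^* ) - E_pi[sum r'] is h_t(s, a) = r^*(s,a) - r'(s,a) - ln pi_t(a|s).
   Given the state, its conditional expectation over a ~ pi_t(.|s) is at most
   sum_a exp(r^*(s,a) - r'(s,a)) - 1 <= 0, by the pointwise Gibbs inequality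
   q (x - ln q) <= e^x - q (i.e. ln y <= y - 1).  Backward induction along the
   trajectory then makes the whole expectation nonpositive. *)

From Stdlib Require Import Reals Lra Lia.
Open Scope R_scope.

Lemma sumR_ext n f g : (forall i, f i = g i) -> sumR n f = sumR n g.
Proof. intros H; induction n; simpl; [reflexivity | now rewrite IHn, H]. Qed.

Lemma sumR_add n f g : sumR n (fun i => f i + g i) = sumR n f + sumR n g.
Proof. induction n; simpl; [lra | rewrite IHn; lra]. Qed.

Lemma sumR_mulr n c f : sumR n (fun i => f i * c) = sumR n f * c.
Proof. induction n; simpl; [lra | rewrite IHn; lra]. Qed.

Lemma sumR_le n f g :
  (forall i, (i < n)%nat -> f i <= g i) -> sumR n f <= sumR n g.
Proof.
  induction n; simpl; intros H; [lra |].
  assert (sumR n f <= sumR n g) by (apply IHn; intros; apply H; lia).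
  assert (f n <= g n) by (apply H; lia).
  lra.
Qed.

Lemma sumR_nonpos n f : (forall i, (i < n)%nat -> f i <= 0) -> sumR n f <= 0.
Proof.
  induction n; simpl; intros H; [lra |].
  assert (sumR n f <= 0) by (apply IHn; intros; apply H; lia).
  assert (f n <= 0) by (apply H; lia).
  lra.
Qed.

Lemma distr_mul_add n q c x :
  is_distr n q -> sumR n (fun i => q i * (c + x i)) = c + sumR n (fun i => q i * x i).
Proof.
  intros [_ Hq].
  rewrite (sumR_ext _ _ (fun i => q i * c + q i * x i)) by (intro; ring).
  now rewrite sumR_add, sumR_mulr, Hq, Rmult_1_l.
Qed.

Lemma distr_mul_const n q c : is_distr n q -> sumR n (fun i => q i * c) = c.
Proof. intros [_ Hq]; now rewrite sumR_mulr, Hq, Rmult_1_l. Qed.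

Lemma gibbs_pointwise x q : 0 <= q -> q * (x - ln q) <= exp x - q.
Proof.
  intros Hq; destruct (Req_dec q 0) as [-> | Hq0].
  - pose proof (exp_pos x); lra.
  - pose proof (exp_ineq1_le (x - ln q)) as Hexp.
    unfold Rminus in Hexp at 2.
    rewrite exp_plus, exp_Ropp, exp_ln in Hexp by lra.
    apply Rmult_le_compat_l with (r := q) in Hexp; [| lra].
    replace (q * (exp x * / q)) with (exp x) in Hexp by (field; lra).
    lra.
Qed.

Lemma gibbs_sum_nonpos n q w :
  is_distr n q -> sumR n (fun i => exp (w i)) <= 1 ->
  sumR n (fun i => q i * (w i - ln (q i))) <= 0.
Proof.
  intros [Hq0 Hq1] Hw.
  apply Rle_trans with (sumR n (fun i => exp (w i) + (-1) * q i)).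
  - apply sumR_le; intros i Hi; pose proof (gibbs_pointwise (w i) (q i) (Hq0 i Hi)); lra.
  - rewrite sumR_add, (sumR_ext _ (fun i => -1 * q i) (fun i => q i * (-1)))
      by (intro; ring).
    rewrite sumR_mulr, Hq1; lra.
Qed.

Section Trajectories.

Variables (nS nA : nat) (p pi : nat -> nat -> nat -> R).

Lemma traj_exp_ext g1 g2 k : forall t s acc,
  (forall t s a, g1 t s a = g2 t s a) ->
  traj_exp nS nA p pi g1 k t s acc = traj_exp nS nA p pi g2 k t s acc.
Proof.
  induction k; intros t s acc Hg; simpl; [reflexivity |].
  apply sumR_ext; intro a; f_equal; apply sumR_ext; intro s'; f_equal.
  now rewrite Hg, IHk.
Qed.

Lemma traj_exp_add g1 g2 k : forall t s acc1 acc2,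
  traj_exp nS nA p pi g1 k t s acc1 + traj_exp nS nA p pi g2 k t s acc2
  = traj_exp nS nA p pi (fun t s a => g1 t s a + g2 t s a) k t s (acc1 + acc2).
Proof.
  induction k; intros t s acc1 acc2; simpl; [reflexivity |].
  rewrite <- sumR_add; apply sumR_ext; intro a.
  rewrite <- Rmult_plus_distr_l, <- sumR_add; f_equal; apply sumR_ext; intro s'.
  rewrite <- Rmult_plus_distr_l, IHk; do 2 f_equal; ring.
Qed.

Variables (T : nat) (g : nat -> nat -> nat -> R).
Hypothesis transition_distr :
  forall s a, (s < nS)%nat -> (a < nA)%nat -> is_distr nS (p s a).
Hypothesis policy_valid : valid_policy nS nA T pi.
Hypothesis step_nonpos : forall t s, (1 <= t <= T)%nat -> (s < nS)%nat ->
  sumR nA (fun a => pi t s a * g t s a) <= 0.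

Lemma traj_exp_le_acc k : forall t s acc,
  (1 <= t)%nat -> (t + k <= T + 1)%nat -> (s < nS)%nat ->
  traj_exp nS nA p pi g k t s acc <= acc.
Proof.
  induction k as [| k IHk]; intros t s acc Ht Htk Hs; simpl; [lra |].
  pose proof (policy_valid t s ltac:(lia) Hs) as Hpi.
  apply Rle_trans with (sumR nA (fun a => pi t s a * (acc + g t s a))).
  - apply sumR_le; intros a Ha; apply Rmult_le_compat_l; [now apply Hpi |].
    apply Rle_trans with (sumR nS (fun s' => p s a s' * (acc + g t s a))).
    + apply sumR_le; intros s' Hs'; apply Rmult_le_compat_l.
      * now apply transition_distr.
      * apply IHk; lia.
    + now rewrite distr_mul_const by auto.
  - rewrite distr_mul_add by exact Hpi.
    pose proof (step_nonpos t s ltac:(lia) Hs); lra.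
Qed.

End Trajectories.

Lemma Epi_ext nS nA T p1 p pi g1 g2 :
  (forall t s a, g1 t s a = g2 t s a) ->
  Epi nS nA T p1 p pi g1 = Epi nS nA T p1 p pi g2.
Proof.
  intros Hg; unfold Epi; apply sumR_ext; intro s.
  now rewrite (traj_exp_ext _ _ _ _ g1 g2).
Qed.

Lemma Epi_add nS nA T p1 p pi g1 g2 :
  Epi nS nA T p1 p pi g1 + Epi nS nA T p1 p pi g2
  = Epi nS nA T p1 p pi (fun t s a => g1 t s a + g2 t s a).
Proof.
  unfold Epi; rewrite <- sumR_add; apply sumR_ext; intro s.
  now rewrite <- Rmult_plus_distr_l, traj_exp_add, Rplus_0_l.
Qed.

Lemma Epi_nonpos nS nA T p1 p pi g :
  valid_MDP nS nA p1 p -> valid_policy nS nA T pi ->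
  (forall t s, (1 <= t <= T)%nat -> (s < nS)%nat ->
     sumR nA (fun a => pi t s a * g t s a) <= 0) ->
  Epi nS nA T p1 p pi g <= 0.
Proof.
  intros [[Hp1 _] Hp] Hpi Hg; unfold Epi.
  apply sumR_nonpos; intros s Hs.
  pose proof (traj_exp_le_acc nS nA p pi T g Hp Hpi Hg T 1 s 0 ltac:(lia) ltac:(lia) Hs).
  pose proof (Hp1 s Hs); nra.
Qed.

Theorem corollary3 (nS nA T : nat) (p1 : nat -> R) (p : nat -> nat -> nat -> R)
  (Rset : (nat -> nat -> R) -> Prop) (rs : nat -> nat -> R)
  (pi : nat -> nat -> nat -> R) :
  (1 <= T)%nat ->
  valid_MDP nS nA p1 p ->
  (exists r0, Rset r0) ->
  Rstar nS nA Rset rs ->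
  valid_policy nS nA T pi ->
  forall r', Rset r' ->
    Jmaxent nS nA T p1 p pi rs <= Epi nS nA T p1 p pi (fun _ s a => r' s a).
Proof.
  intros _ Hmdp _ Hrs Hpi r' Hr'.
  set (h := fun t s a => (rs s a - r' s a) - ln (pi t s a)).
  assert (Hsplit : Jmaxent nS nA T p1 p pi rs
                   = Epi nS nA T p1 p pi h + Epi nS nA T p1 p pi (fun _ s a => r' s a)).
  { unfold Jmaxent; rewrite !Epi_add; apply Epi_ext; intros; unfold h; ring. }
  assert (Hh : Epi nS nA T p1 p pi h <= 0).
  { apply Epi_nonpos; auto; intros t s Ht Hs.
    apply (gibbs_sum_nonpos nA (pi t s) (fun a => rs s a - r' s a)).
    - now apply Hpi.
    - now apply Hrs. }
  lra.
Qed.
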